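(* Let $\mathcal{X}$ be a subcategory of $\mathcal{C}$ closed under extensions and CoCones, and let $\mathcal{W}$ be an $\mathcal{X}$-injective cogenerator for $\mathcal{X}$. For any $\mathbb{E}$-triangle $A\xrightarrow{x}B\xrightarrow{y}C\dashrightarrow$ in $\mathcal{C}$, if two of $A,B,C$ lie in $\widehat{\mathcal{X}}$, then so does the third.
   Context: $\mathcal{C}=(\mathcal{C},\mathbb{E},\mathfrak{s})$ is an extriangulated category (in the sense of Nakaoka–Palu) with enough projectives and enough injectives; a conflation realizing $\delta\in\mathbb{E}(C,A)$ is written as an $\mathbb{E}$-triangle $A\to B\to C\dashrightarrow$. All subcategories are full, additive, closed under isomorphisms and direct summands. Higher extensions: $\mathbb{E}^1=\mathbb{E}$, $\mathbb{E}^{i+1}(X,Y)=\mathbb{E}(X,\Sigma^iY)\cong\mathbb{E}(\Omega^iX,Y)$. $\mathcal{X}$ is extension-closed if for every $\mathbb{E}$-triangle $A\to B\to C\dashrightarrow$ with $A,C\in\mathcal{X}$ one has $B\in\mathcal{X}$; closed under CoCones if for every such $\mathbb{E}$-triangle with $B,C\in\mathcal{X}$ one has $A\in\mathcal{X}$. $\mathcal{W}$ is an $\mathcal{X}$-injective cogenerator for $\mathcal{X}$ if $\mathcal{W}\subseteq\mathcal{X}$, for each $X\in\mathcal{X}$ there is an $\mathbb{E}$-triangle $X\to W\to X'\dashrightarrow$ with $W\in\mathcal{W}$, $X'\in\mathcal{X}$, and $\mathbb{E}^i(X,W)=0$ for all $X\in\mathcal{X}$, $W\in\mathcal{W}$,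 $i\ge1$. For $n\ge0$, $\widehat{\mathcal{X}}_n$ is the class of objects $C$ for which there exist $\mathbb{E}$-triangles $K_{i+1}\to X_i\to K_i\dashrightarrow$ ($0\le i\le n-1$) with $K_0=C$, all $X_i\in\mathcal{X}$ and $K_n\in\mathcal{X}$; $\widehat{\mathcal{X}}=\bigcup_n\widehat{\mathcal{X}}_n$. *)

From HB Require Import structures.
From mathcomp Require Import all_boot all_algebra.
Set Implicit Arguments. Unset Strict Implicit. Unset Printing Implicit Defensive.
Import GRing.Theory.
Local Open Scope ring_scope.

Record CatData := {
  Obj : Type;
  Hom : Obj -> Obj -> zmodType;
  comp : forall A B C : Obj, Hom B C -> Hom A B -> Hom A C;
  idm : forall A : Obj, Hom A A
}.
Arguments comp {c A B C}.
Arguments idm {c A}.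
Notation "g \oc f" := (comp g f) (at level 40, left associativity).

Section Cat.
Variable C : CatData.
Implicit Types A B D : Obj C.

Definition is_iso A B (f : Hom A B) : Prop :=
  exists g : Hom B A, g \oc f = idm /\ f \oc g = idm.

Definition isomorphic A B : Prop := exists f : Hom A B, is_iso f.

Definition is_zero_obj (Z : Obj C) : Prop := (idm : Hom Z Z) = 0.

Definition is_biprod A1 A2 (S : Obj C) (i1 : Hom A1 S) (i2 : Hom A2 S)
  (p1 : Hom S A1) (p2 : Hom S A2) : Prop :=
  [/\ p1 \oc i1 = idm, p2 \oc i2 = idm, p1 \oc i2 = 0, p2 \oc i1 = 0
    & i1 \oc p1 + i2 \oc p2 = idm].

Record IsAdditive : Prop := {
  comp_assoc : forall A B D (E : Obj C) (h : Hom D E) (g : Hom B D) (f : Hom A B),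
      h \oc (g \oc f) = (h \oc g) \oc f;
  comp_idl : forall A B (f : Hom A B), idm \oc f = f;
  comp_idr : forall A B (f : Hom A B), f \oc idm = f;
  comp_addl : forall A B D (g g' : Hom B D) (f : Hom A B),
      (g + g') \oc f = g \oc f + g' \oc f;
  comp_addr : forall A B D (g : Hom B D) (f f' : Hom A B),
      g \oc (f + f') = g \oc f + g \oc f';
  zero_exists : exists Z : Obj C, is_zero_obj Z;
  biprod_exists : forall A1 A2, exists (S : Obj C) (i1 : Hom A1 S) (i2 : Hom A2 S)
      (p1 : Hom S A1) (p2 : Hom S A2), is_biprod i1 i2 p1 p2
}.

Definition is_subcat (X : Obj C -> Prop) : Prop :=
  [/\ (forall Z, is_zero_obj Z -> X Z),
      (forall A1 A2 S (i1 : Hom A1 S) (i2 : Hom A2 S) p1 p2,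
          is_biprod i1 i2 p1 p2 -> X A1 -> X A2 -> X S),
      (forall A B, isomorphic A B -> X A -> X B)
    & (forall A1 A2 S (i1 : Hom A1 S) (i2 : Hom A2 S) p1 p2,
          is_biprod i1 i2 p1 p2 -> X S -> X A1)].
End Cat.

(* Extriangulated structure: E(C,A) = Ext C A, a_* = pushf, c^* = pullb,
   and the realization s given as the relation
   real delta x y  <->  s(delta) = [A -x-> B -y-> C].                    *)
Record ExtData (C : CatData) := {
  Ext : Obj C -> Obj C -> zmodType;
  pushf : forall (A A' Z : Obj C), Hom A A' -> Ext Z A -> Ext Z A';
  pullb : forall (A Z Z' : Obj C), Hom Z' Z -> Ext Z A -> Ext Z' A;
  real : forall (A B Z : Obj C), Ext Z A -> Hom A B -> Hom B Z -> Prop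
}.
Arguments Ext {C}.
Arguments pushf {C e A A' Z}.
Arguments pullb {C e A Z Z'}.
Arguments real {C e A B Z}.

Section Extri.
Variable C : CatData.
Variable E : ExtData C.
Implicit Types A B D F : Obj C.

Local Notation Ex := (Ext E).
Local Notation "a |_* d" := (@pushf C E _ _ _ a d) (at level 30).
Local Notation "c |^* d" := (@pullb C E _ _ _ c d) (at level 30).
Local Notation rl := (@real C E _ _ _).

Record IsExtriangulated : Prop := {
  pushf_id : forall A Z (d : Ex Z A), idm |_* d = d;
  pushf_comp : forall A A' A'' Z (a : Hom A A') (a' : Hom A' A'') (d : Ex Z A),
      (a' \oc a) |_* d = a' |_* (a |_* d);
  pullb_id : forall A Z (d : Ex Z A), idm |^* d = d;
  pullb_comp : forall A Z Z' Z'' (c : Hom Z' Z) (c' : Hom Z'' Z') (d : Ex Z A),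
      (c \oc c') |^* d = c' |^* (c |^* d);
  push_pull : forall A A' Z Z' (a : Hom A A') (c : Hom Z' Z) (d : Ex Z A),
      a |_* (c |^* d) = c |^* (a |_* d);
  pushf_addE : forall A A' Z (a : Hom A A') (d d' : Ex Z A),
      a |_* (d + d') = a |_* d + a |_* d';
  pushf_addH : forall A A' Z (a a' : Hom A A') (d : Ex Z A),
      (a + a') |_* d = a |_* d + a' |_* d;
  pullb_addE : forall A Z Z' (c : Hom Z' Z) (d d' : Ex Z A),
      c |^* (d + d') = c |^* d + c |^* d';
  pullb_addH : forall A Z Z' (c c' : Hom Z' Z) (d : Ex Z A),
      (c + c') |^* d = c |^* d + c' |^* d;
  (* s is a realization: s(delta) is a (nonempty) equivalence class *)
  real_exists : forall A Z (d : Ex Z A),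
      exists (B : Obj C) (x : Hom A B) (y : Hom B Z), rl d x y;
  real_unique : forall A B B' Z (d : Ex Z A) (x : Hom A B) (y : Hom B Z)
      (x' : Hom A B') (y' : Hom B' Z), rl d x y -> rl d x' y' ->
      exists b : Hom B B', [/\ is_iso b, b \oc x = x' & y' \oc b = y];
  real_iso : forall A B B' Z (d : Ex Z A) (x : Hom A B) (y : Hom B Z)
      (b : Hom B B') (b' : Hom B' B), rl d x y ->
      b' \oc b = idm -> b \oc b' = idm -> rl d (b \oc x) (y \oc b');
  real_morph : forall A B Z A' B' Z' (d : Ex Z A) (x : Hom A B) (y : Hom B Z)
      (d' : Ex Z' A') (x' : Hom A' B') (y' : Hom B' Z') (a : Hom A A') (c : Hom Z Z'),
      rl d x y -> rl d' x' y' -> a |_* d = c |^* d' ->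
      exists b : Hom B B', b \oc x = x' \oc a /\ y' \oc b = c \oc y;
  real_zero : forall A Z S (i1 : Hom A S) (i2 : Hom Z S) p1 p2,
      is_biprod i1 i2 p1 p2 -> rl (0 : Ex Z A) i1 p2;
  real_sum : forall A B Z A' B' Z' (d : Ex Z A) (x : Hom A B) (y : Hom B Z)
      (d' : Ex Z' A') (x' : Hom A' B') (y' : Hom B' Z')
      SA (iA : Hom A SA) (iA' : Hom A' SA) pA pA'
      SB (iB : Hom B SB) (iB' : Hom B' SB) pB pB'
      SZ (iZ : Hom Z SZ) (iZ' : Hom Z' SZ) pZ pZ',
      rl d x y -> rl d' x' y' ->
      is_biprod iA iA' pA pA' -> is_biprod iB iB' pB pB' -> is_biprod iZ iZ' pZ pZ' ->
      rl (iA |_* (pZ |^* d) + iA' |_* (pZ' |^* d'))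
         (iB \oc x \oc pA + iB' \oc x' \oc pA')
         (iZ \oc y \oc pB + iZ' \oc y' \oc pB');
  et3 : forall A B Z A' B' Z' (d : Ex Z A) (x : Hom A B) (y : Hom B Z)
      (d' : Ex Z' A') (x' : Hom A' B') (y' : Hom B' Z') (a : Hom A A') (b : Hom B B'),
      rl d x y -> rl d' x' y' -> b \oc x = x' \oc a ->
      exists c : Hom Z Z', a |_* d = c |^* d' /\ c \oc y = y' \oc b;
  et3op : forall A B Z A' B' Z' (d : Ex Z A) (x : Hom A B) (y : Hom B Z)
      (d' : Ex Z' A') (x' : Hom A' B') (y' : Hom B' Z') (b : Hom B B') (c : Hom Z Z'),
      rl d x y -> rl d' x' y' -> y' \oc b = c \oc y ->
      exists a : Hom A A', a |_* d = c |^* d' /\ b \oc x = x' \oc a;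
  et4 : forall A B D Z F (d : Ex D A) (f : Hom A B) (f' : Hom B D)
      (d' : Ex F B) (g : Hom B Z) (g' : Hom Z F),
      rl d f f' -> rl d' g g' ->
      exists (G : Obj C) (h' : Hom Z G) (d'' : Ex G A) (dd : Hom D G) (e : Hom G F),
      [/\ rl d'' (g \oc f) h', rl (f' |_* d') dd e,
          dd |^* d'' = d, f |_* d'' = e |^* d' &
          h' \oc g = dd \oc f' /\ e \oc h' = g'];
  et4op : forall A B D Z F (d : Ex B D) (f' : Hom D A) (f : Hom A B)
      (d' : Ex Z F) (g' : Hom F B) (g : Hom B Z),
      rl d f' f -> rl d' g' g ->
      exists (G : Obj C) (dd : Hom D G) (e : Hom G F) (h' : Hom G A) (d'' : Ex Z G),
      [/\ rl d'' h' (g \oc f), rl (g' |^* d) dd e,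
          d' = e |_* d'', dd |_* d = g |^* d'' &
          f' = h' \oc dd /\ f \oc h' = g' \oc e]
}.

Definition projective (P : Obj C) : Prop :=
  forall A B Z (d : Ex Z A) (x : Hom A B) (y : Hom B Z), rl d x y ->
  forall f : Hom P Z, exists g : Hom P B, y \oc g = f.

Definition injective (I : Obj C) : Prop :=
  forall A B Z (d : Ex Z A) (x : Hom A B) (y : Hom B Z), rl d x y ->
  forall f : Hom A I, exists g : Hom B I, g \oc x = f.

Definition enough_projectives : Prop :=
  forall Z, exists A P (d : Ex Z A) (x : Hom A P) (y : Hom P Z), rl d x y /\ projective P.

Definition enough_injectives : Prop :=
  forall A, exists I Z (d : Ex Z A) (x : Hom A I) (y : Hom I Z), rl d x y /\ injective I.

(* cosyz n Y Z : Z is an n-th cosyzygy Sigma^n Y, obtained by iterating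
   E-triangles  Y' -> I -> Sigma Y' --> with I injective. *)
Inductive cosyz : nat -> Obj C -> Obj C -> Prop :=
| cosyz0 Y : cosyz 0 Y Y
| cosyzS n Y Z I Z' (d : Ex Z' Z) (x : Hom Z I) (y : Hom I Z') :
    cosyz n Y Z -> rl d x y -> injective I -> cosyz n.+1 Y Z'.

(* E^i(X,Y) = 0 for i >= 1, where E^i(X,Y) = E(X, Sigma^(i-1) Y) *)
Definition higher_ext_vanish (i : nat) (X Y : Obj C) : Prop :=
  forall Z, cosyz i.-1 Y Z -> forall d : Ex X Z, d = 0.

Definition extension_closed (X : Obj C -> Prop) : Prop :=
  forall A B Z (d : Ex Z A) (x : Hom A B) (y : Hom B Z), rl d x y ->
  X A -> X Z -> X B.

Definition cocone_closed (X : Obj C -> Prop) : Prop :=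
  forall A B Z (d : Ex Z A) (x : Hom A B) (y : Hom B Z), rl d x y ->
  X B -> X Z -> X A.

Definition inj_cogenerator (X W : Obj C -> Prop) : Prop :=
  [/\ (forall A, W A -> X A),
      (forall X0, X X0 -> exists W0 X' (d : Ex X' X0) (x : Hom X0 W0) (y : Hom W0 X'),
           [/\ rl d x y, W W0 & X X'])
    & (forall X0 W0 i, X X0 -> W W0 -> (1 <= i)%N -> higher_ext_vanish i X0 W0)].

Inductive XhatN (X : Obj C -> Prop) : nat -> Obj C -> Prop :=
| XhatN0 A : X A -> XhatN X 0 A
| XhatNS n K X0 Z (d : Ex Z K) (x : Hom K X0) (y : Hom X0 Z) :
    rl d x y -> X X0 -> XhatN X n K -> XhatN X n.+1 Z.

Definition Xhat (X : Obj C -> Prop) (A : Obj C) : Prop := exists n, XhatN X n A.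

End Extri.

From Pilot Require Import Defs.
From mathcomp Require Import ssreflect ssrfun ssrbool eqtype ssrnat ssralg.
Set Implicit Arguments. Unset Strict Implicit. Unset Printing Implicit Defensive.
Import GRing.Theory.
Local Open Scope ring_scope.

Section Extriangulated.
Variable C : CatData.
Variable E : ExtData C.
Hypothesis HC : IsAdditive C.
Hypothesis HE : IsExtriangulated E.

Local Notation "a |_* d" := (@pushf C E _ _ _ a d) (at level 30).
Local Notation "c |^* d" := (@pullb C E _ _ _ c d) (at level 30).

Lemma comp0r (A B D : Obj C) (g : Hom B D) : g \oc (0 : Hom A B) = 0.
Proof.
have h := comp_addr HC g (0 : Hom A B) 0; rewrite addr0 in h.
by apply: (addrI (g \oc (0 : Hom A B))); rewrite -h addr0.
Qed.

Lemma comp0l (A B D : Obj C) (f : Hom A B) : (0 : Hom B D) \oc f = 0.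
Proof.
have h := comp_addl HC (0 : Hom B D) 0 f; rewrite addr0 in h.
by apply: (addrI ((0 : Hom B D) \oc f)); rewrite -h addr0.
Qed.

Lemma compBl (A B D : Obj C) (g g' : Hom B D) (f : Hom A B) :
  (g - g') \oc f = g \oc f - g' \oc f.
Proof.
suff hN : (- g') \oc f = - (g' \oc f) by rewrite (comp_addl HC) hN.
by apply: (addIr (g' \oc f)); rewrite -(comp_addl HC) !addNr comp0l.
Qed.

Lemma compBr (A B D : Obj C) (g : Hom B D) (f f' : Hom A B) :
  g \oc (f - f') = g \oc f - g \oc f'.
Proof.
suff hN : g \oc (- f') = - (g \oc f') by rewrite (comp_addr HC) hN.
by apply: (addIr (g \oc f')); rewrite -(comp_addr HC) !addNr comp0r.
Qed.

Lemma pushf0E (A A' Z : Obj C) (a : Hom A A') : a |_* (0 : Ext E Z A) = 0.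
Proof.
have h := pushf_addE HE a (0 : Ext E Z A) 0; rewrite addr0 in h.
by apply: (addrI (a |_* (0 : Ext E Z A))); rewrite -h addr0.
Qed.

Lemma pushf0H (A A' Z : Obj C) (d : Ext E Z A) : (0 : Hom A A') |_* d = 0.
Proof.
have h := pushf_addH HE (0 : Hom A A') 0 d; rewrite addr0 in h.
by apply: (addrI ((0 : Hom A A') |_* d)); rewrite -h addr0.
Qed.

Lemma pullb0E (A Z Z' : Obj C) (c : Hom Z' Z) : c |^* (0 : Ext E Z A) = 0.
Proof.
have h := pullb_addE HE c (0 : Ext E Z A) 0; rewrite addr0 in h.
by apply: (addrI (c |^* (0 : Ext E Z A))); rewrite -h addr0.
Qed.

Lemma pullb0H (A Z Z' : Obj C) (d : Ext E Z A) : (0 : Hom Z' Z) |^* d = 0.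
Proof.
have h := pullb_addH HE (0 : Hom Z' Z) 0 d; rewrite addr0 in h.
by apply: (addrI ((0 : Hom Z' Z) |^* d)); rewrite -h addr0.
Qed.

Lemma comp_eq_l (A B D F : Obj C) (h : Hom D F) (g : Hom B D) (f : Hom A B) k :
  g \oc f = k -> h \oc g \oc f = h \oc k.
Proof. by move=> <-; rewrite (comp_assoc HC). Qed.

Ltac rewrite_assoc H :=
  rewrite ?(comp_assoc HC); first [rewrite H | rewrite (comp_eq_l _ H)];
  rewrite ?(comp_assoc HC).

Lemma iso_id (A : Obj C) : is_iso (idm : Hom A A).
Proof. by exists idm; rewrite (comp_idl HC). Qed.

Lemma iso_lr (A B : Obj C) (b : Hom A B) (l r : Hom B A) :
  l \oc b = idm -> b \oc r = idm -> is_iso b.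
Proof.
move=> hl hr; exists l; split => //.
suff -> : l = r by [].
by rewrite -(comp_idr HC l) -hr (comp_assoc HC) hl (comp_idl HC).
Qed.

Lemma biprod_sym (A1 A2 S : Obj C) (i1 : Hom A1 S) (i2 : Hom A2 S) p1 p2 :
  is_biprod i1 i2 p1 p2 -> is_biprod i2 i1 p2 p1.
Proof. by case=> h1 h2 h3 h4 h5; split => //; rewrite addrC. Qed.

Lemma real_to_zero (A Z0 : Obj C) : is_zero_obj Z0 -> real (0 : Ext E Z0 A) idm 0.
Proof.
move=> hz; apply: (real_zero HE (i2 := 0) (p1 := idm)).
by split; rewrite ?(comp_idl HC) ?(comp_idr HC) ?comp0l ?comp0r ?addr0 ?hz.
Qed.

Lemma real_from_zero (W Z0 : Obj C) : is_zero_obj Z0 -> real (0 : Ext E W Z0) 0 idm.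
Proof.
move=> hz; apply: (real_zero HE (i2 := idm) (p1 := 0)).
by split; rewrite ?(comp_idl HC) ?(comp_idr HC) ?comp0l ?comp0r ?add0r ?hz.
Qed.

Lemma deflation_inflation0 (A B Z : Obj C) (d : Ext E Z A) (x : Hom A B) (y : Hom B Z) :
  real d x y -> y \oc x = 0.
Proof.
move=> hd; have [Z0 hz] := zero_exists HC.
have [a [_ ->]] := et3op HE (b := y) (c := idm) hd (real_from_zero Z hz) erefl.
by rewrite comp0l.
Qed.

Lemma deflation_factor (A B Z W : Obj C) (d : Ext E Z A) (x : Hom A B) (y : Hom B Z)
  (f : Hom B W) : real d x y -> f \oc x = 0 -> exists g : Hom Z W, g \oc y = f.
Proof.
move=> hd hf; have [Z0 hz] := zero_exists HC.
have hc0 : f \oc x = 0 \oc (0 : Hom A Z0) by rewrite hf comp0l.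
have [c [_ hc]] := et3 HE (a := 0) (b := f) hd (real_from_zero W hz) hc0.
by exists c; rewrite hc (comp_idl HC).
Qed.

Lemma inflation_factor (A B Z W : Obj C) (d : Ext E Z A) (x : Hom A B) (y : Hom B Z)
  (f : Hom W B) : real d x y -> y \oc f = 0 -> exists h : Hom W A, x \oc h = f.
Proof.
move=> hd hf; have [Z0 hz] := zero_exists HC.
have hc0 : y \oc f = (0 : Hom Z0 Z) \oc 0 by rewrite hf comp0l.
have [a [_ ha]] := et3op HE (b := f) (c := 0) (real_to_zero W hz) hd hc0.
by exists a; rewrite -ha (comp_idr HC).
Qed.

(* An endomorphism of the middle term fixing both x and y is invertible:
   n := u - 1 factors as x h and g y, so n^2 = g (y x) h = 0 and 1 - n is an
   inverse of u = 1 + n. *)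
Lemma unipotent_iso (A B Z : Obj C) (d : Ext E Z A) (x : Hom A B) (y : Hom B Z)
  (u : Hom B B) : real d x y -> u \oc x = x -> y \oc u = y -> is_iso u.
Proof.
move=> hd hux hyu; pose n := u - idm.
have hu : u = n + idm by rewrite /n subrK.
clearbody n; subst u.
have hnx : n \oc x = 0.
  by apply: (addIr x); rewrite add0r -[in RHS]hux (comp_addl HC) (comp_idl HC).
have hyn : y \oc n = 0.
  by apply: (addIr y); rewrite add0r -[in RHS]hyu (comp_addr HC) (comp_idr HC).
have [g hg] := deflation_factor hd hnx.
have [h hh] := inflation_factor hd hyn.
have hnn : n \oc n = 0.
  rewrite -{1}hg -hh (comp_assoc HC) -(comp_assoc HC g) (deflation_inflation0 hd).
  by rewrite comp0r comp0l.
exists (idm - n); split.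
- by rewrite compBl !(comp_addr HC) hnn !(comp_idl HC) (comp_idr HC) add0r addrC addKr.
- by rewrite compBr !(comp_addl HC) hnn !(comp_idl HC) (comp_idr HC) add0r addrC addKr.
Qed.

Lemma pushf_pullb_inv (A A' Z Z' : Obj C) (a : Hom A A') (a' : Hom A' A)
  (c : Hom Z Z') (c' : Hom Z' Z) (d : Ext E Z A) (d' : Ext E Z' A') :
  a' \oc a = idm -> c \oc c' = idm -> a |_* d = c |^* d' -> a' |_* d' = c' |^* d.
Proof.
move=> ha hc h.
rewrite -[d](pushf_id HE) -ha (pushf_comp HE) h (push_pull HE) -(pullb_comp HE) hc.
by rewrite (pullb_id HE).
Qed.

(* Realizing the inverse
   morphism of extensions gives b2 with b2 b and b b2 unipotent. *)
Lemma five_lemma (A B Z A' B' Z' : Obj C) (d : Ext E Z A) (x : Hom A B) (y : Hom B Z)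
  (d' : Ext E Z' A') (x' : Hom A' B') (y' : Hom B' Z')
  (a : Hom A A') (b : Hom B B') (c : Hom Z Z') :
  real d x y -> real d' x' y' -> is_iso a -> is_iso c -> a |_* d = c |^* d' ->
  b \oc x = x' \oc a -> y' \oc b = c \oc y -> is_iso b.
Proof.
move=> hd hd' [a' [ha1 ha2]] [c' [hc1 hc2]] hrel hbx hyb.
have [b2 [hb2x hyb2]] := real_morph HE hd' hd (pushf_pullb_inv ha1 hc2 hrel).
have [l [hl _]] : is_iso (b2 \oc b).
  apply: (unipotent_iso hd).
  - by rewrite_assoc hbx; rewrite_assoc hb2x; rewrite_assoc ha1; rewrite (comp_idr HC).
  - by rewrite_assoc hyb2; rewrite_assoc hyb; rewrite_assoc hc1; rewrite (comp_idl HC).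
have [r [_ hr]] : is_iso (b \oc b2).
  apply: (unipotent_iso hd').
  - by rewrite_assoc hb2x; rewrite_assoc hbx; rewrite_assoc ha2; rewrite (comp_idr HC).
  - by rewrite_assoc hyb; rewrite_assoc hyb2; rewrite_assoc hc2; rewrite (comp_idl HC).
apply: (iso_lr (l := l \oc b2) (r := b2 \oc r)).
- by rewrite -(comp_assoc HC).
- by rewrite (comp_assoc HC).
Qed.

Lemma real_pullb_iso (A B Z Z' : Obj C) (d : Ext E Z A) (x : Hom A B) (y : Hom B Z)
  (psi : Hom Z Z') (phi : Hom Z' Z) :
  real d x y -> phi \oc psi = idm -> psi \oc phi = idm ->
  real (phi |^* d) x (psi \oc y).
Proof.
move=> hd h1 h2.
have [B' [x' [y' h']]] := real_exists HE (phi |^* d).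
have hrel : idm |_* d = psi |^* (phi |^* d).
  by rewrite (pushf_id HE) -(pullb_comp HE) h1 (pullb_id HE).
have [b [hbx hyb]] := real_morph HE hd h' hrel.
have [bi [hb1 hb2]] : is_iso b.
  by apply: (five_lemma hd h' (iso_id A) _ hrel hbx hyb); exists phi.
have := real_iso HE h' hb2 hb1.
rewrite (comp_idr HC) in hbx.
by rewrite -hbx hyb (comp_assoc HC) hb1 (comp_idl HC).
Qed.

Lemma real_pushf_iso (A A' B Z : Obj C) (d : Ext E Z A) (x : Hom A B) (y : Hom B Z)
  (a : Hom A A') (a' : Hom A' A) :
  real d x y -> a' \oc a = idm -> a \oc a' = idm -> real (a |_* d) (x \oc a') y.
Proof.
move=> hd h1 h2.
have [B' [x' [y' h']]] := real_exists HE (a |_* d).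
have hrel : a |_* d = idm |^* (a |_* d) by rewrite (pullb_id HE).
have [b [hbx hyb]] := real_morph HE hd h' hrel.
have [bi [hb1 hb2]] : is_iso b.
  by apply: (five_lemma hd h' _ (iso_id Z) hrel hbx hyb); exists a'.
have := real_iso HE h' hb2 hb1.
rewrite (comp_idl HC) in hyb.
have -> : x' = b \oc x \oc a' by rewrite hbx -(comp_assoc HC) h2 (comp_idr HC).
by rewrite hyb !(comp_assoc HC) hb1 (comp_idl HC).
Qed.

Lemma split_conflation (A B Z : Obj C) (x : Hom A B) (y : Hom B Z) :
  real (0 : Ext E Z A) x y -> exists (r : Hom B A) (s : Hom Z B), is_biprod x s r y.
Proof.
move=> hd.
have [S [i1 [i2 [p1 [p2 hb]]]]] := biprod_exists HC A Z.
have [phi [[psi [hp1 hp2]] e1 e2]] := real_unique HE (real_zero HE hb) hd.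
case: hb => b1 b2 b3 b4 b5.
have hy : y = p2 \oc psi by rewrite -e2 -(comp_assoc HC) hp2 (comp_idr HC).
exists (p1 \oc psi), (phi \oc i2); split.
- by rewrite -e1; rewrite_assoc hp1; rewrite (comp_idr HC).
- by rewrite_assoc e2.
- by rewrite_assoc hp1; rewrite (comp_idr HC).
- by rewrite -e1; rewrite_assoc e2.
- rewrite -e1 hy (comp_assoc HC) -(comp_assoc HC phi i1).
  rewrite (comp_assoc HC (phi \oc i2)) -(comp_assoc HC phi i2 p2).
  by rewrite -(comp_addl HC) -(comp_addr HC) b5 (comp_idr HC).
Qed.

Lemma pushf_inflation0 (A B Z : Obj C) (d : Ext E Z A) (x : Hom A B) (y : Hom B Z) :
  real d x y -> x |_* d = 0.
Proof.
move=> hd.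
have [S [i1 [i2 [p1 [p2 hb]]]]] := biprod_exists HC B Z.
case: (hb) => b1 b2 b3 b4 b5.
have hc : p2 \oc (i1 + i2 \oc y) = idm \oc y.
  by rewrite (comp_addr HC) b4 add0r (comp_assoc HC) b2.
have [a [ha hax]] := et3op HE hd (real_zero HE hb) hc.
suff -> : x = a by rewrite ha pullb0E.
have := f_equal (fun f => p1 \oc f) hax.
rewrite !(comp_assoc HC) b1 (comp_idl HC) (comp_addr HC) b1 (comp_assoc HC) b3.
by rewrite comp0l addr0 (comp_idl HC).
Qed.

Lemma injective_ext0 (I B Z : Obj C) (d : Ext E Z I) (x : Hom I B) (y : Hom B Z) :
  real d x y -> Defs.injective E I -> d = 0.
Proof.
move=> hd hI; have [r hr] := hI _ _ _ _ _ _ hd idm.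
by rewrite -[d](pushf_id HE) -hr (pushf_comp HE) (pushf_inflation0 hd) pushf0E.
Qed.

(* Injective objects are closed under extensions (the extension splits). *)
Lemma injective_extension (I R J : Obj C) (d : Ext E J I) (x : Hom I R) (y : Hom R J) :
  real d x y -> Defs.injective E I -> Defs.injective E J -> Defs.injective E R.
Proof.
move=> hd hI hJ.
have d0 := injective_ext0 hd hI; subst d.
have [r [s [_ _ _ _ hsum]]] := split_conflation hd.
move=> A B Z d0 a b hd0 f.
have [g1 hg1] := hI _ _ _ _ _ _ hd0 (r \oc f).
have [g2 hg2] := hJ _ _ _ _ _ _ hd0 (y \oc f).
exists (x \oc g1 + s \oc g2).
rewrite (comp_addl HC) -!(comp_assoc HC) hg1 hg2 !(comp_assoc HC) -(comp_addl HC) hsum.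
exact: (comp_idl HC).
Qed.

(* N is the middle
   term of a realization of i1_* d1 + i2_* d2 in E(Z, A1 (+) A2); apply (ET4)
   to each summand inclusion. *)
Lemma homotopy_pullback (A1 B1 A2 B2 Z : Obj C)
  (d1 : Ext E Z A1) (x1 : Hom A1 B1) (y1 : Hom B1 Z)
  (d2 : Ext E Z A2) (x2 : Hom A2 B2) (y2 : Hom B2 Z) :
  real d1 x1 y1 -> real d2 x2 y2 ->
  exists N (e1 : Ext E B1 A2) (u1 : Hom A2 N) (v1 : Hom N B1)
    (e2 : Ext E B2 A1) (u2 : Hom A1 N) (v2 : Hom N B2),
    real e1 u1 v1 /\ real e2 u2 v2.
Proof.
move=> hd1 hd2.
have [S [i1 [i2 [p1 [p2 hb]]]]] := biprod_exists HC A1 A2.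
have [N [u [v hth]]] := real_exists HE (i1 |_* d1 + i2 |_* d2).
case: (hb) => b1 b2 b3 b4 b5.
have [G1 [h1 [e1 [g1 [g1' [hr1 hG1 _ _ _]]]]]] := et4 HE (real_zero HE (biprod_sym hb)) hth.
have [G2 [h2 [e2 [g2 [g2' [hr2 hG2 _ _ _]]]]]] := et4 HE (real_zero HE hb) hth.
rewrite (pushf_addE HE) -!(pushf_comp HE) b1 b3 (pushf_id HE) pushf0H addr0 in hG1.
rewrite (pushf_addE HE) -!(pushf_comp HE) b2 b4 (pushf_id HE) pushf0H add0r in hG2.
have [phi1 [[psi1 [hp1 hq1]] _ _]] := real_unique HE hG1 hd1.
have [phi2 [[psi2 [hp2 hq2]] _ _]] := real_unique HE hG2 hd2.
exists N, (psi1 |^* e1), (u \oc i2), (phi1 \oc h1),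
  (psi2 |^* e2), (u \oc i1), (phi2 \oc h2).
by split; apply: real_pullb_iso.
Qed.

Lemma homotopy_pushout (A B1 C1 B2 C2 : Obj C)
  (d1 : Ext E C1 A) (x1 : Hom A B1) (y1 : Hom B1 C1)
  (d2 : Ext E C2 A) (x2 : Hom A B2) (y2 : Hom B2 C2) :
  real d1 x1 y1 -> real d2 x2 y2 ->
  exists N (e1 : Ext E C2 B1) (u1 : Hom B1 N) (v1 : Hom N C2)
    (e2 : Ext E C1 B2) (u2 : Hom B2 N) (v2 : Hom N C1),
    real e1 u1 v1 /\ real e2 u2 v2.
Proof.
move=> hd1 hd2.
have [S [i1 [i2 [p1 [p2 hb]]]]] := biprod_exists HC C1 C2.
have [N [u [v hth]]] := real_exists HE (p1 |^* d1 + p2 |^* d2).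
case: (hb) => b1 b2 b3 b4 b5.
have [G2 [g2 [g2' [h2 [e2 [hr2 hG2 _ _ _]]]]]] := et4op HE hth (real_zero HE (biprod_sym hb)).
have [G1 [g1 [g1' [h1 [e1 [hr1 hG1 _ _ _]]]]]] := et4op HE hth (real_zero HE hb).
rewrite (pullb_addE HE) -!(pullb_comp HE) b2 b3 (pullb_id HE) pullb0H add0r in hG2.
rewrite (pullb_addE HE) -!(pullb_comp HE) b1 b4 (pullb_id HE) pullb0H addr0 in hG1.
have [phi2 [[psi2 [hp2 hq2]] _ _]] := real_unique HE hG2 hd2.
have [phi1 [[psi1 [hp1 hq1]] _ _]] := real_unique HE hG1 hd1.
exists N, (phi1 |_* e1), (h1 \oc psi1), (p2 \oc v),
  (phi2 |_* e2), (h2 \oc psi2), (p1 \oc v).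
by split; apply: real_pushf_iso.
Qed.

Lemma cosyz0_eq (M Z : Obj C) : cosyz E 0 M Z -> Z = M.
Proof. by move=> h; inversion h. Qed.

Lemma cosyz_last (j : nat) (M Z : Obj C) : cosyz E j.+1 M Z ->
  exists Z0 I (d : Ext E Z Z0) (x : Hom Z0 I) (y : Hom I Z),
    [/\ cosyz E j M Z0, real d x y & Defs.injective E I].
Proof. by move=> h; inversion h; subst; exists Z0, I, d, x, y. Qed.

Lemma cosyz_first (j : nat) (M Z : Obj C) : cosyz E j.+1 M Z ->
  exists M1 I (d : Ext E M1 M) (m : Hom M I) (p : Hom I M1),
    [/\ real d m p, Defs.injective E I & cosyz E j M1 Z].
Proof.
elim: j Z => [|j IH] Z h; have [Z0 [I [d [x [y [h0 hr hI]]]]]] := cosyz_last h.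
- rewrite (cosyz0_eq h0) in d x hr *.
  by exists Z, I, d, x, y; split => //; apply: cosyz0.
- have [M1 [I1 [d1 [m [p [h1 h2 h3]]]]]] := IH _ h0.
  by exists M1, I1, d1, m, p; split => //; apply: (cosyzS h3 hr hI).
Qed.

Lemma cosyz_shift (j : nat) (K K1 Z : Obj C) :
  cosyz E 1 K K1 -> cosyz E j K1 Z -> cosyz E j.+1 K Z.
Proof.
move=> hK1 hZ; elim: hZ hK1 => [//|n Y Z0 I Z' d x y _ IH hr hI] hK1.
exact: (cosyzS (IH hK1) hr hI).
Qed.

Section Orthogonality.
Variable X : Obj C -> Prop.

Definition perp1 (M : Obj C) : Prop := forall X0, X X0 -> forall d : Ext E X0 M, d = 0.

(* M is X-injective: every cosyzygy of M is in perp1, i.e. E^i(X, M) = 0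
   for all i >= 1. *)
Definition perp (M : Obj C) : Prop := forall j Z, cosyz E j M Z -> perp1 Z.

(* A fragment of the long exact sequence of E(X0, -): given K -> G -> M and
   K -> J -> K' with J injective, E(X0, G) = E(X0, K') = 0 forces
   E(X0, M) = 0.  An extension M -m-> Y -> X0 is killed by c_* where
   d1 = c^* dK, so c extends along m; (ET4)^op then exhibits the extension
   as the image under y_* of an element of E(X0, G) = 0. *)
Lemma perp1_cone (K G M K' J : Obj C) (d1 : Ext E M K) (x : Hom K G) (y : Hom G M)
  (dK : Ext E K' K) (k : Hom K J) (q : Hom J K') :
  real d1 x y -> real dK k q -> Defs.injective E J -> perp1 G -> perp1 K' -> perp1 M.
Proof.
move=> hd1 hdK hJ hG hK' X0 hX0 dl.
have [g hg] := hJ _ _ _ _ _ _ hd1 k.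
have [c [hc _]] := et3 HE (a := idm) (b := g) hd1 hdK (etrans hg (esym (comp_idr HC k))).
rewrite (pushf_id HE) in hc.
have [Y [m [t hdl]]] := real_exists HE dl.
have [ce hce] : exists ce : Hom Y K', ce \oc m = c.
  have [S [i1 [i2 [p1 [p2 hb]]]]] := biprod_exists HC K' X0.
  have hrel : c |_* dl = idm |^* 0 by rewrite (hK' X0 hX0 (c |_* dl)) pullb0E.
  have [b [hbm _]] := real_morph HE hdl (real_zero HE hb) hrel.
  case: hb => b1 _ _ _ _; exists (p1 \oc b).
  by rewrite -(comp_assoc HC) hbm (comp_assoc HC) b1 (comp_idl HC).
have [G' [f' [f he]]] := real_exists HE (ce |^* dK).
have [G0 [dd [e [h' [d'' [_ hr2 hr3 _ _]]]]]] := et4op HE he hdl.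
rewrite -(pullb_comp HE) hce -hc in hr2.
have [phi [_ _ hphi]] := real_unique HE hr2 hd1.
by rewrite hr3 -hphi (pushf_comp HE) (hG X0 hX0 (phi |_* d'')) pushf0E.
Qed.

Hypothesis HI : enough_injectives E.

Lemma horseshoe (K G M I M1 : Obj C) (d1 : Ext E M K) (x : Hom K G) (y : Hom G M)
  (dM : Ext E M1 M) (m : Hom M I) (p : Hom I M1) :
  real d1 x y -> real dM m p -> Defs.injective E I ->
  exists K1 G1, [/\ cosyz E 1 K K1, cosyz E 1 G G1 &
    exists (d : Ext E M1 K1) (u : Hom K1 G1) (v : Hom G1 M1), real d u v].
Proof.
move=> hd1 hdM hI.
have [JG [SG [dG [g [h [hdG hJ]]]]]] := HI G.
have [Q [h' [d'' [dd [e [hKQ hGQ _ _ _]]]]]] := et4 HE hd1 hdG.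
have [N [e1 [u1 [v1 [e2 [u2 [v2 [hQN hIN]]]]]]]] := homotopy_pushout hGQ hdM.
have [R [f1 [a1 [b1 [f2 [a2 [b2 [hRN hGR]]]]]]]] := homotopy_pullback hdG hIN.
exists Q, N; split.
- exact: (cosyzS (cosyz0 E K) hKQ hJ).
- exact: (cosyzS (cosyz0 E G) hGR (injective_extension hRN hI hJ)).
- by exists e1, u1, v1.
Qed.

(* Induction on the
   cosyzygy degree, moving to the conflation of cosyzygies given by the
   horseshoe lemma. *)
Lemma perp_cone (K G M : Obj C) (d1 : Ext E M K) (x : Hom K G) (y : Hom G M) :
  real d1 x y -> perp K -> perp G -> perp M.
Proof.
move=> hd1 hK hG j; elim: j K G M d1 x y hd1 hK hG => [|j IH] K G M d1 x y hd1 hK hG Z hZ.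
- rewrite (cosyz0_eq hZ).
  have [J [K' [dK [k [q [hdK hJ]]]]]] := HI K.
  apply: (perp1_cone hd1 hdK hJ (hG 0%N G (cosyz0 E G))).
  exact: (hK 1%N K' (cosyzS (cosyz0 E K) hdK hJ)).
- have [M1 [I [dM [m [p [hdM hI hZ1]]]]]] := cosyz_first hZ.
  have [K1 [G1 [hK1 hG1 [d [u [v hd]]]]]] := horseshoe hd1 hdM hI.
  apply: (IH _ _ _ _ _ _ hd) hZ1.
  + by move=> j' Z' hz'; apply: (hK _ _ (cosyz_shift hK1 hz')).
  + by move=> j' Z' hz'; apply: (hG _ _ (cosyz_shift hG1 hz')).
Qed.

End Orthogonality.

Lemma XhatN_mono (Y X : Obj C -> Prop) (n : nat) (K : Obj C) :
  (forall A, Y A -> X A) -> XhatN E Y n K -> XhatN E X n K.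
Proof.
move=> hYX; elim=> [A hA|k K0 X0 Z d x y hr hX0 _ IH].
- exact/XhatN0/hYX.
- exact: (XhatNS hr (hYX X0 hX0) IH).
Qed.

(* For X closed under CoCones, X^_n is closed under CoCones of deflations
   onto objects of X: if B -> B' -> X1 with B' in X^_n and X1 in X, then B
   is in X^_n.  (ET4)^op composes the deflation with the first step of the
   resolution of B'. *)
Lemma XhatN_cocone_X (X : Obj C -> Prop) (HXcoc : cocone_closed E X)
  (n : nat) (B B' X1 : Obj C) (d : Ext E X1 B) (a : Hom B B') (b : Hom B' X1) :
  XhatN E X n B' -> real d a b -> X X1 -> XhatN E X n B.
Proof.
move=> hB' hd hX1.
case: hB' a b d hd => [A hA|k K X0 Z d0 x y hr hX0 hK] a b d hd.
- exact/XhatN0/(HXcoc _ _ _ _ _ _ hd hA hX1).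
- have [G [dd [e [h' [d'' [hGX0 hKG _ _ _]]]]]] := et4op HE hr hd.
  exact: (XhatNS hKG (HXcoc _ _ _ _ _ _ hGX0 hX0 hX1) hK).
Qed.

Section ResolutionDimension.
Variables X W : Obj C -> Prop.
Hypothesis HI : enough_injectives E.
Hypothesis hWX : forall A, W A -> X A.
Hypothesis hW0 : forall Z, is_zero_obj Z -> W Z.
Hypothesis hcog : forall X0, X X0 ->
  exists W0 X' (d : Ext E X' X0) (x : Hom X0 W0) (y : Hom W0 X'), [/\ real d x y, W W0 & X X'].
Hypothesis hvan : forall X0 W0 i, X X0 -> W W0 -> (1 <= i)%N -> higher_ext_vanish E i X0 W0.
Hypothesis HXext : extension_closed E X.
Hypothesis HXcoc : cocone_closed E X.

Local Notation Xhat := (Xhat E X).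

Lemma perp_What (n : nat) (M : Obj C) : XhatN E W n M -> perp X M.
Proof.
have perp_W (W0 : Obj C) : W W0 -> perp X W0.
  by move=> hW j Z hz X0 hX0; apply: (hvan (i := j.+1) hX0 hW).
elim=> [A hA|k K W0 Z d x y hr hWobj _ IH]; first exact: perp_W.
exact: (perp_cone HI hr IH (perp_W _ hWobj)).
Qed.

Lemma What_ext0 (n : nat) (K X0 : Obj C) (d : Ext E X0 K) :
  XhatN E W n K -> X X0 -> d = 0.
Proof. by move=> hK hX0; apply: (perp_What hK (cosyz0 E K) hX0). Qed.

(* Induction on the resolution:
   for K' -> X0 -> C, the approximation of K' is extended by a
   W-coresolution step via (ET4), then glued to X0 by a homotopy pushout. *)
Lemma Xhat_W_approx (n : nat) (Cc : Obj C) : XhatN E X n Cc ->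
  exists K XC (d : Ext E Cc K) (x : Hom K XC) (y : Hom XC Cc),
    [/\ real d x y, X XC & exists m, XhatN E W m K].
Proof.
elim=> [A hA|k K X0 Z d x y hr hX0 _ IH].
- have [Z0 hz] := zero_exists HC.
  exists Z0, A, 0, 0, idm; split => //; first exact: real_from_zero.
  by exists 0%N; apply/XhatN0/hW0.
- have [KK [XK [dk [xk [yk [hk hXK [m hKK]]]]]]] := IH.
  have [WK [X'K [dw [xw [yw [hw hWK hX'K]]]]]] := hcog hXK.
  have [G [h' [d'' [dd [e [hKKG hKG _ _ _]]]]]] := et4 HE hk hw.
  have [N [e1 [u1 [v1 [e2 [u2 [v2 [hX0N hGN]]]]]]]] := homotopy_pushout hr hKG.
  exists G, N, e2, u2, v2; split => //.
  + exact: (HXext hX0N hX0 hX'K).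
  + by exists m.+1; apply: (XhatNS hKKG hWK hKK).
Qed.

Lemma Xhat_W_coapprox (n : nat) (Cc : Obj C) : XhatN E X n Cc ->
  exists WC XC (d : Ext E XC Cc) (x : Hom Cc WC) (y : Hom WC XC),
    [/\ real d x y, X XC & exists m, XhatN E W m WC].
Proof.
move=> hC.
have [K [XC [dk [xk [yk [hk hXC [m hK]]]]]]] := Xhat_W_approx hC.
have [W1 [X1 [dw [xw [yw [hw hW1 hX1]]]]]] := hcog hXC.
have [G [h' [d'' [dd [e [hKG hCG _ _ _]]]]]] := et4 HE hk hw.
exists G, X1, (yk |_* dw), dd, e; split => //.
by exists m.+1; apply: (XhatNS hKG hW1 hK).
Qed.

(* Induction on the resolution of K, after
   a homotopy pullback with the left approximation KA -> XA -> A.  When K is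
   in W the pullback term lies in X; otherwise K -> P -> XA splits because
   E(XA, K) = 0, and the first resolution step L -> W0 -> K of K lets the
   induction hypothesis apply to L. *)
Lemma Xhat_extension_What (m : nat) (K : Obj C) : XhatN E W m K ->
  forall Q A (d : Ext E A K) (a : Hom K Q) (b : Hom Q A),
  real d a b -> Xhat A -> Xhat Q.
Proof.
elim=> [K0 hK0|k L W0 K0 dL xL yL hrL hWobj hL IH] Q A d a b hd [nA hA];
  have [KA [XA [dA [xA [yA [hdA hXA [mA hKA]]]]]]] := Xhat_W_approx hA;
  have [P [e1 [u1 [v1 [e2 [u2 [v2 [hKAP hKP]]]]]]]] := homotopy_pullback hd hdA;
  have hKA' := XhatN_mono hWX hKA.
- have hXP : X P := HXext hKP (hWX hK0) hXA.
  by exists mA.+1; apply: (XhatNS hKAP hXP hKA').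
- have he20 : e2 = 0 := What_ext0 e2 (XhatNS hrL hWobj hL) hXA.
  subst e2.
  have [r [s hbp]] := split_conflation hKP.
  have [N [f1 [a1 [b1 [f2 [a2 [b2 [hLN hXAN]]]]]]]] :=
    homotopy_pullback (real_zero HE (biprod_sym hbp)) hrL.
  have hXN : X N := HXext hXAN hXA (hWX hWobj).
  have [G [dd [e [h' [d'' [hGN hLG _ _ _]]]]]] := et4op HE hLN hKAP.
  have [kG hG] := IH _ _ _ _ _ hLG (ex_intro _ mA hKA').
  by exists kG.+1; apply: (XhatNS hGN hXN hG).
Qed.

Lemma Xhat_cocone_X (Q X0 Cc : Obj C) (d : Ext E Cc Q) (a : Hom Q X0) (b : Hom X0 Cc) :
  real d a b -> X X0 -> Xhat Cc -> Xhat Q.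
Proof.
move=> hd hX0 [nC hC].
have [KC [XC [dC [xC [yC [hdC hXC [mC hKC]]]]]]] := Xhat_W_approx hC.
have [R [e1 [u1 [v1 [e2 [u2 [v2 [hKCR hQR]]]]]]]] := homotopy_pullback hd hdC.
have [nR hR] := Xhat_extension_What hKC hKCR (ex_intro _ 0%N (XhatN0 E hX0)).
by exists nR; apply: (XhatN_cocone_X HXcoc hR hQR hXC).
Qed.

Lemma Xhat_cone (A B Cc : Obj C) (d : Ext E Cc A) (x : Hom A B) (y : Hom B Cc) :
  real d x y -> Xhat A -> Xhat B -> Xhat Cc.
Proof.
move=> hd hA [nB hB].
have [KB [XB [dB [xB [yB [hdB hXB [mB hKB]]]]]]] := Xhat_W_approx hB.
have [G [dd [e [h' [d'' [hGC hKG _ _ _]]]]]] := et4op HE hdB hd.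
have [k hG] := Xhat_extension_What hKB hKG hA.
by exists k.+1; apply: (XhatNS hGC hXB hG).
Qed.

Lemma Xhat_extension (A B Cc : Obj C) (d : Ext E Cc A) (x : Hom A B) (y : Hom B Cc) :
  real d x y -> Xhat A -> Xhat Cc -> Xhat B.
Proof.
move=> hd [nA hA] hC.
have [WA [XA [dw [xw [yw [hw hXA [mA hWA]]]]]]] := Xhat_W_coapprox hA.
have [N [e1 [u1 [v1 [e2 [u2 [v2 [hBN hWN]]]]]]]] := homotopy_pushout hd hw.
have [k hN] := Xhat_extension_What hWA hWN hC.
by exists k; apply: (XhatN_cocone_X HXcoc hN hBN hXA).
Qed.

Lemma Xhat_cocone (A B Cc : Obj C) (d : Ext E Cc A) (x : Hom A B) (y : Hom B Cc) :
  real d x y -> Xhat B -> Xhat Cc -> Xhat A.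
Proof.
move=> hd [nB hB] hC.
have [KB [XB [dB [xB [yB [hdB hXB [mB hKB]]]]]]] := Xhat_W_approx hB.
have [G [dd [e [h' [d'' [hGC hKG _ _ _]]]]]] := et4op HE hdB hd.
have hG := Xhat_cocone_X hGC hXB hC.
exact: (Xhat_cone hKG (ex_intro _ mB (XhatN_mono hWX hKB)) hG).
Qed.

End ResolutionDimension.
End Extriangulated.

Theorem proposition3p15 (C : CatData) (E : ExtData C)
  (HC : IsAdditive C) (HE : IsExtriangulated E)
  (HP : enough_projectives E) (HI : enough_injectives E)
  (X W : Obj C -> Prop) (HXs : is_subcat X) (HWs : is_subcat W)
  (HXext : extension_closed E X) (HXcoc : cocone_closed E X)
  (HW : inj_cogenerator E X W)
  (A B Z : Obj C) (d : Ext E Z A) (x : Hom A B) (y : Hom B Z)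
  (Hd : real d x y) :
  [/\ (Xhat E X A -> Xhat E X B -> Xhat E X Z),
      (Xhat E X A -> Xhat E X Z -> Xhat E X B)
    & (Xhat E X B -> Xhat E X Z -> Xhat E X A)].
Proof.
have [hWX hcog hvan] := HW.
have [hW0 _ _ _] := HWs.
split.
- exact: (Xhat_cone HC HE HI hWX hW0 hcog hvan HXext Hd).
- exact: (Xhat_extension HC HE HI hWX hW0 hcog hvan HXext HXcoc Hd).
- exact: (Xhat_cocone HC HE HI hWX hW0 hcog hvan HXext HXcoc Hd).
Qed.
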